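(* Let $N\ge2$ and $r\in(0,1)$. The revenue guarantee of the second price auction with random reserve distributed according to $G_r(x)=(x/r)^{\frac1{N-1}}$, $x\in[0,r]$, is at least $$\int_{[0,r]}\frac{x^{\frac N{N-1}}}{r^{\frac1{N-1}}}\,dF(x)+r(1-F(r)).$$
   Context: A single indivisible good is sold to $N$ bidders with private values $v_i\in[0,1]$, each with the same marginal cdf $F$ on $[0,1]$ (point masses allowed). $\Pi(F)$ is the set of probability measures on $[0,1]^N$ with all one-dimensional marginals $F$. The revenue guarantee of a mechanism with payments $t$ (under truthful bidding) is $\inf_{\pi\in\Pi(F)}\int\sum_it_i\,d\pi$. The second price auction with random reserve distributed as a cdf $G$: a reserve $\rho\sim G$ is drawn independently of bids; a highest bidder (ties broken uniformly at random) wins if her bid is at least $\rho$ and pays $\max(\rho,\text{second highest bid})$; equivalently a unique highest bidder with value $v_{(1)}$ wins with probability $G(v_{(1)})$ and pays $v_{(1)}G(v_{(1)})-\int_{v_{(2)}}^{v_{(1)}}G(s)\,ds$, where $v_{(2)}$ is the second highest value. *)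

From HB Require Import structures.
From mathcomp Require Import all_boot all_order all_algebra.
From mathcomp Require Import all_classical all_reals all_analysis.
Set Implicit Arguments. Unset Strict Implicit. Unset Printing Implicit Defensive.
Import Order.TTheory GRing.Theory Num.Theory.
Local Open Scope classical_set_scope.
Local Open Scope ring_scope.

(* Highest value v_(1) of a bid profile (values lie in [0,1], so the
   neutral element 0 is harmless). *)
Definition vfirst (R : realType) (N : nat) (v : 'I_N -> R) : R :=
  \big[Num.max/0]_(i < N) v i.

Definition vsecond (R : realType) (N : nat) (v : 'I_N -> R) : R :=
  \big[Num.max/0]_(i < N) \big[Num.max/0]_(j < N | j != i) Num.min (v i) (v j).

Definition Gr (R : realType) (N : nat) (r : R) (x : R) : R :=
  if x < 0 then 0
  else if x <= r then (x / r) `^ (1 / (N.-1)%:R)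
  else 1.

(* Expected revenue (over the independent reserve rho ~ G) of the second price
   auction with random reserve G at value profile v:
   v_(1) G(v_(1)) - int_{v_(2)}^{v_(1)} G(s) ds. *)
Definition spa_revenue (R : realType) (N : nat) (G : R -> R) (v : 'I_N -> R) : R :=
  vfirst v * G (vfirst v)
  - Rintegral (@lebesgue_measure R) `[vsecond v, vfirst v] G.

From HB Require Import structures.
From mathcomp Require Import all_boot all_order all_algebra.
From mathcomp Require Import all_classical all_reals all_analysis.
From mathcomp Require Import measurable_realfun.
From mathcomp Require Import ring lra.
Import Order.TTheory GRing.Theory Num.Theory.
Import numFieldNormedType.Exports.
Local Open Scope classical_set_scope.
Local Open Scope ring_scope.

(* Let G = G_r, a = 1/(N-1) and psi(x) = m G(m) with m = min(x, r).  Since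
   int_0^x t^a dt = x^(a+1)/(a+1) and 1/(a+1) = (N-1)/N, the primitive of G is
   J(x) = (N-1)/N psi(x) + (x - r)^+, hence x G(x) - J(x) = psi(x)/N.  The
   revenue at a profile is v1 G(v1) - J(v1) + J(v2) >= (psi(v1) + (N-1) psi(v2))/N,
   and as at most one bidder exceeds v2 and psi is nondecreasing, this is at
   least the average of the psi(v_i).  Each psi(X_i) has mean int psi dF, which
   dominates the bound: psi(x) = x^(N/(N-1)) / r^a on [0, r] and psi = r beyond. *)

Lemma derivable_oo_LRcontinuous_powR {R : realType} (p x : R) : 0 < p -> 0 < x ->
  derivable_oo_LRcontinuous (@powR R ^~ p) 0 x.
Proof.
move=> p_gt0 x_gt0; split.
- move=> t; rewrite in_itv/= => /andP[t_gt0 _].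
  by apply: derivable_powR; rewrite in_itv/= t_gt0.
- by rewrite powR0 ?gt_eqF//; exact: powR_cvg0.
- have : {for x, continuous (@powR R ^~ p)}.
    apply: differentiable_continuous; apply/derivable1_diffP.
    by apply: derivable_powR; rewrite in_itv/= x_gt0.
  exact: cvg_at_left_filter.
Qed.

Lemma integrable_powR {R : realType} (p x : R) : 0 < p ->
  (@lebesgue_measure R).-integrable `[0, x] (EFin \o @powR R ^~ p).
Proof.
move=> p_gt0; have x1_gt0 : 0 < `|x| + 1 by rewrite ltr_pwDr.
have : (@lebesgue_measure R).-integrable `[0, `|x| + 1] (EFin \o @powR R ^~ p).
  apply: continuous_compact_integrable; first exact: segment_compact.
  exact/derivable_oo_LRcontinuous_within/derivable_oo_LRcontinuous_powR.
apply: integrableS => //.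
by apply: subset_itvl; rewrite bnd_simp (le_trans (ler_norm x)) ?lerDl.
Qed.

Lemma Rintegral_powR {R : realType} (p x : R) : 0 < p -> 0 <= x ->
  \int[@lebesgue_measure R]_(t in `[0, x]) t `^ p = x `^ (p + 1) / (p + 1).
Proof.
move=> p_gt0; have p1_gt0 : 0 < p + 1 by rewrite addr_gt0.
rewrite le_eqVlt => /predU1P[<-|x_gt0].
  by rewrite set_itv1 Rintegral_set1 powR0 ?mul0r// gt_eqF.
pose F t := (p + 1)^-1 * t `^ (p + 1).
have dF (t : R) : 0 < t -> is_derive t 1 F (t `^ p).
  move=> t_gt0; apply: is_derive_eq.
    exact: (is_deriveZ ((p + 1)^-1) (is_derive1_powR (p + 1) t_gt0)).
  by rewrite addrK /GRing.scale/= mulrA mulVf ?mul1r// gt_eqF.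
have [_ F0 Fx] := derivable_oo_LRcontinuous_powR _ _ p1_gt0 x_gt0.
rewrite /Rintegral (@continuous_FTC2 _ _ F 0 x)//=.
- by rewrite /F powR0 ?mulr0 ?subr0 1?mulrC// gt_eqF.
- exact/derivable_oo_LRcontinuous_within/derivable_oo_LRcontinuous_powR.
- split.
  + move=> t; rewrite in_itv/= => /andP[t_gt0 _].
    exact: (@ex_derive _ _ _ _ _ _ _ (dF t t_gt0)).
  + exact: cvgMl_tmp F0.
  + exact: cvgMl_tmp Fx.
- move=> t; rewrite in_itv/= => /andP[t_gt0 _].
  by rewrite derive1E (@derive_val _ _ _ _ _ _ _ (dF t t_gt0)).
Qed.

Section order_statistics.
Context {R : realType} {N : nat}.
Implicit Types v : 'I_N -> R.

Lemma vfirst_ge0 v : 0 <= vfirst v.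
Proof. exact: bigmax_ge_id. Qed.

Lemma le_vfirst v i : v i <= vfirst v.
Proof. exact: le_bigmax. Qed.

Lemma vsecond_ge0 v : 0 <= vsecond v.
Proof. exact: bigmax_ge_id. Qed.

Lemma vsecond_le_vfirst v : vsecond v <= vfirst v.
Proof.
apply: bigmax_le => [|i _]; first exact: vfirst_ge0.
apply: bigmax_le => [|j _]; first exact: vfirst_ge0.
by rewrite ge_min le_vfirst.
Qed.

Lemma le_vsecond v i j : j != i -> Num.min (v i) (v j) <= vsecond v.
Proof.
by move=> ji; apply: (@bigmax_sup _ _ _ _ i) => //; exact: (@le_bigmax_cond _ _ _ _ j).
Qed.

Lemma sum_le_vfirst_vsecond (f : R -> R) v : (0 < N)%N ->
  {homo f : x y / x <= y} ->
  \sum_i f (v i) <= f (vfirst v) + (N.-1)%:R * f (vsecond v).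
Proof.
move=> N_gt0 f_nd.
have [[i v2_lt_vi]|] := pselect (exists i, vsecond v < v i).
  have vj_le_v2 j : j != i -> v j <= vsecond v.
    by move=> ji; have := le_vsecond v i j ji; rewrite ge_min leNgt v2_lt_vi.
  rewrite (bigD1 i)//= lerD ?f_nd ?le_vfirst//.
  have -> : N.-1 = #|[pred j : 'I_N | j != i]| by rewrite cardC1 card_ord.
  by rewrite mulr_natl -sumr_const ler_sum// => j ji; exact/f_nd/vj_le_v2.
move=> /forallNP vi_le_v2.
apply: (@le_trans _ _ (\sum_(i < N) f (vsecond v))).
  by apply: ler_sum => j _; apply/f_nd; rewrite leNgt; apply/negP; exact: vi_le_v2.
rewrite sumr_const card_ord.
have -> : f (vsecond v) *+ N = f (vsecond v) + (N.-1)%:R * f (vsecond v).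
  by rewrite mulr_natl -mulrS prednK.
by rewrite lerD ?f_nd ?vsecond_le_vfirst.
Qed.

End order_statistics.

Definition psi {R : realType} (N : nat) (r x : R) : R :=
  Num.min x r * Gr N r (Num.min x r).

Definition Gr_prim {R : realType} (N : nat) (r x : R) : R :=
  (N.-1)%:R / N%:R * psi N r x + Num.max (x - r) 0.

Section reserve_cdf.
Context {R : realType} {N : nat} {r : R}.
Hypotheses (N_gt1 : (1 < N)%N) (r_gt0 : 0 < r).
Local Notation G := (Gr N r).
Local Notation a := (1 / (N.-1)%:R : R).

Let N_neq0 : N%:R != 0 :> R.
Proof. by rewrite pnatr_eq0 -lt0n ltnW. Qed.

Let N1_gt0 : 0 < (N.-1)%:R :> R.
Proof. by rewrite ltr0n -ltnS prednK// ltnW. Qed.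

Let natN : N%:R = (N.-1)%:R + 1 :> R.
Proof. by rewrite natr1 prednK// ltnW. Qed.

Lemma Gr_exponent_gt0 : 0 < a.
Proof. by rewrite divr_gt0. Qed.

Lemma Gr_exponentD1 : a + 1 = N%:R / (N.-1)%:R.
Proof. by rewrite natN mulrDl divff ?lt0r_neq0// addrC. Qed.

Lemma Gr_lt0 x : x < 0 -> G x = 0.
Proof. by move=> x_lt0; rewrite /Gr x_lt0. Qed.

Lemma GrE x : 0 <= x <= r -> G x = (r `^ a)^-1 * x `^ a.
Proof.
move=> /andP[x_ge0 x_le_r]; rewrite /Gr ltNge x_ge0 x_le_r /= mulrC.
rewrite powRM ?invr_ge0 ?(ltW r_gt0)//.
by rewrite -powR_inv1 ?(ltW r_gt0)// -powRrM mulN1r powRN.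
Qed.

Lemma Gr_eq1 x : r <= x -> G x = 1.
Proof.
move=> r_le_x; rewrite /Gr ltNge (le_trans (ltW r_gt0) r_le_x) /=.
case: ifPn => // x_le_r; have -> : x = r by apply/eqP; rewrite eq_le x_le_r.
by rewrite divff ?gt_eqF// powR1.
Qed.

Lemma Gr_ge0 x : 0 <= G x.
Proof. by rewrite /Gr; case: ifP => // _; case: ifP => // _; exact: powR_ge0. Qed.

Lemma Gr_le1 x : G x <= 1.
Proof.
rewrite /Gr; case: ifPn => // x_ge0; case: ifPn => // x_le_r.
rewrite -leNgt in x_ge0.
rewrite -[leRHS](_ : 1 `^ a = 1); last by rewrite powR1.
apply: (ge0_ler_powR (ltW Gr_exponent_gt0));
  by rewrite ?nnegrE ?divr_ge0 ?(ltW r_gt0) ?ler_pdivrMr ?mul1r.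
Qed.

Lemma Gr_nondecreasing : {homo G : x y / x <= y}.
Proof.
move=> x y x_le_y.
have [x_lt0|x_ge0] := ltP x 0; first by rewrite Gr_lt0 ?Gr_ge0.
have [r_le_y|y_lt_r] := leP r y; first by rewrite (Gr_eq1 _ r_le_y) Gr_le1.
have y_ge0 := le_trans x_ge0 x_le_y.
rewrite !GrE ?x_ge0 ?y_ge0 ?(ltW y_lt_r) ?(le_trans x_le_y (ltW y_lt_r))//.
rewrite ler_pM2l ?invr_gt0 ?powR_gt0//.
by apply: (ge0_ler_powR (ltW Gr_exponent_gt0)); rewrite ?nnegrE.
Qed.

Local Notation psi := (psi N r).
Local Notation Gr_prim := (Gr_prim N r).

Lemma psi_le x : x <= r -> psi x = x * G x.
Proof. by move=> x_le_r; rewrite /psi (min_idPl x_le_r). Qed.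

Lemma psi_ge x : r <= x -> psi x = r.
Proof. by move=> r_le_x; rewrite /psi (min_idPr r_le_x) Gr_eq1// mulr1. Qed.

Lemma psi_ge0 x : 0 <= psi x.
Proof.
rewrite /psi; have [m_lt0|m_ge0] := ltP (Num.min x r) 0.
  by rewrite Gr_lt0// mulr0.
by rewrite mulr_ge0// Gr_ge0.
Qed.

Lemma psi_nondecreasing : {homo psi : x y / x <= y}.
Proof.
move=> x y x_le_y; rewrite {1}/psi.
have [m_lt0|m_ge0] := ltP (Num.min x r) 0; first by rewrite Gr_lt0// mulr0 psi_ge0.
have m_le : Num.min x r <= Num.min y r by rewrite le_min !ge_min x_le_y lexx orbT.
by rewrite ler_pM ?Gr_ge0// Gr_nondecreasing.
Qed.

Lemma psi_powR x : 0 <= x <= r -> psi x = x `^ (N%:R / (N.-1)%:R) / r `^ a.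
Proof.
move=> /andP[x_ge0 x_le_r]; rewrite psi_le// GrE ?x_ge0// -Gr_exponentD1.
rewrite powRD ?powRr1//; first ring.
by rewrite gt_eqF// addr_gt0 ?Gr_exponent_gt0.
Qed.

Lemma Rintegral_Gr_le x : 0 <= x <= r ->
  Rintegral (@lebesgue_measure R) `[0, x] G = Gr_prim x.
Proof.
move=> /andP[x_ge0 x_le_r].
have -> : Rintegral (@lebesgue_measure R) `[0, x] G =
    \int[@lebesgue_measure R]_(t in `[0, x]) ((r `^ a)^-1 * t `^ a).
  apply: eq_Rintegral => t t_in.
  have /andP[t_ge0 t_le_x] : 0 <= t <= x by move: t_in; rewrite inE/= in_itv.
  by rewrite -/(G t) GrE ?t_ge0 ?(le_trans t_le_x).
rewrite RintegralZl ?integrable_powR ?Gr_exponent_gt0//.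
rewrite Rintegral_powR ?Gr_exponent_gt0//.
rewrite /Gr_prim (max_idPr _) ?subr_le0// addr0 psi_le// GrE ?x_ge0//.
rewrite powRD ?powRr1// ?Gr_exponentD1; last first.
  by rewrite -Gr_exponentD1 gt_eqF ?addr_gt0 ?Gr_exponent_gt0.
by field; rewrite N_neq0 !lt0r_neq0 ?powR_gt0.
Qed.

Lemma integrable_Gr u v : (@lebesgue_measure R).-integrable `[u, v] (EFin \o G).
Proof.
apply: measurable_bounded_integrable => //.
- have := lebesgue_measure_itv `[u, v]; rewrite /= => ->.
  by case: ifP => _; rewrite ?ltry.
- by apply: nondecreasing_measurable => //; exact: Gr_nondecreasing.
- exists 1; split; first exact: num_real.
  move=> M M_gt1 t _ /=; rewrite ger0_norm ?Gr_ge0//.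
  exact: le_trans (Gr_le1 t) (ltW M_gt1).
Qed.

Lemma Rintegral_Gr0 x : 0 <= x ->
  Rintegral (@lebesgue_measure R) `[0, x] G = Gr_prim x.
Proof.
move=> x_ge0; have [x_le_r|r_lt_x] := leP x r; first by rewrite Rintegral_Gr_le ?x_ge0.
have := @Rintegral_itvB R G (BLeft 0) (BRight x) r (integrable_Gr 0 x).
rewrite !bnd_simp (ltW r_gt0) (ltW r_lt_x) => /(_ erefl erefl).
have -> : \int[@lebesgue_measure R]_(t in `]r, x]) G t = x - r.
  rewrite (@eq_Rintegral _ _ _ _ _ (fun=> 1)); last first.
    by move=> t; rewrite inE/= in_itv/= => /andP[r_lt_t _]; rewrite Gr_eq1// ltW.
  rewrite Rintegral_cst// mul1r.
  have := lebesgue_measure_itv `]r, x]; rewrite /= lte_fin r_lt_x => ->.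
  by rewrite -EFinB.
rewrite (Rintegral_Gr_le r) ?lexx ?(ltW r_gt0)// => /eqP; rewrite subr_eq => /eqP ->.
rewrite /Gr_prim !psi_ge ?(ltW r_lt_x)// subrr maxxx addr0 addrC.
by rewrite (max_idPl _) ?subr_ge0 ?(ltW r_lt_x).
Qed.

Lemma Rintegral_Gr u v : 0 <= u <= v ->
  Rintegral (@lebesgue_measure R) `[u, v] G = Gr_prim v - Gr_prim u.
Proof.
move=> /andP[u_ge0 u_le_v].
have := @Rintegral_itvB R G (BLeft 0) (BRight v) u (integrable_Gr 0 v).
rewrite !bnd_simp u_ge0 u_le_v => /(_ erefl erefl).
rewrite -!Rintegral_Gr0 ?(le_trans u_ge0 u_le_v)// => ->.
rewrite Rintegral_itv_obnd_cbnd//.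
by apply: integrableS (integrable_Gr u v) => //; apply: subset_itvr; rewrite bnd_simp.
Qed.

Lemma mulGr_sub_Gr_prim x : 0 <= x -> x * G x - Gr_prim x = psi x / N%:R.
Proof.
move=> x_ge0; rewrite /Gr_prim; have [x_le_r|r_lt_x] := leP x r.
  rewrite psi_le// (max_idPr _) ?subr_le0// addr0 natN.
  by field; rewrite -natN N_neq0.
rewrite psi_ge ?Gr_eq1 ?(ltW r_lt_x)// mulr1 natN.
rewrite (max_idPl _) ?subr_ge0 ?(ltW r_lt_x)//.
by field; rewrite -natN N_neq0.
Qed.

Lemma spa_revenue_Gr_ge (v : 'I_N -> R) :
  N%:R^-1 * \sum_i psi (v i) <= spa_revenue G v.
Proof.
have [v1_ge0 v2_ge0] := (vfirst_ge0 v, vsecond_ge0 v).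
rewrite /spa_revenue Rintegral_Gr ?v2_ge0 ?vsecond_le_vfirst//.
have -> : vfirst v * G (vfirst v) - (Gr_prim (vfirst v) - Gr_prim (vsecond v)) =
    psi (vfirst v) / N%:R + Gr_prim (vsecond v).
  by rewrite -mulGr_sub_Gr_prim//; ring.
have psi_le_prim : (N.-1)%:R / N%:R * psi (vsecond v) <= Gr_prim (vsecond v).
  by rewrite /Gr_prim lerDl le_max lexx orbT.
apply: le_trans (lerD (lexx _) psi_le_prim).
have sum_le := sum_le_vfirst_vsecond psi v (ltnW N_gt1) psi_nondecreasing.
apply: le_trans (ler_wpM2l _ sum_le) _; first by rewrite invr_ge0 ler0n.
rewrite [leRHS](_ : _ = N%:R^-1 * (psi (vfirst v) + (N.-1)%:R * psi (vsecond v)))//.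
by field.
Qed.

Lemma measurable_psi : measurable_fun setT psi.
Proof. by apply: nondecreasing_measurable => //; exact: psi_nondecreasing. Qed.

End reserve_cdf.

Section integral_lemmas.
Local Open Scope ereal_scope.
Context {d : measure_display} {T : measurableType d} {R : realType}.

Lemma ge0_le_integral_nonmeasurable (mu : {measure set T -> \bar R})
    (f g : T -> \bar R) :
  (forall x, 0 <= f x) -> (forall x, f x <= g x) ->
  \int[mu]_x f x <= \int[mu]_x g x.
Proof.
move=> f_ge0 f_le_g.
rewrite !ge0_integralTE// => [|x]; last exact: le_trans (f_ge0 x) (f_le_g x).
apply: ereal_sup_le => _ [h h_le_f <-]; exists h => //= x.
exact: le_trans (h_le_f x) (f_le_g x).
Qed.

Context {d' : measure_display} {U : measurableType d'}.
Variables (P : {measure set T -> \bar R}) (mu : {measure set U -> \bar R}).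

Lemma ge0_integral_law (X : T -> U) (f : U -> \bar R) :
  measurable_fun setT X -> (forall A, measurable A -> P (X @^-1` A) = mu A) ->
  measurable_fun setT f -> (forall y, 0 <= f y) ->
  \int[P]_x f (X x) = \int[mu]_y f y.
Proof.
move=> mX lawX mf f_ge0.
have := ge0_integral_pushforward mX P measurableT mf (fun y _ => f_ge0 y).
rewrite preimage_setT => <-.
by apply: eq_measure_integral => A mA _; exact: lawX.
Qed.

Lemma ge0_integral_mean_law (N : nat) (X : 'I_N -> T -> U) (f : U -> R) :
  (0 < N)%N ->
  (forall i, measurable_fun setT (X i)) ->
  (forall i A, measurable A -> P (X i @^-1` A) = mu A) ->
  measurable_fun setT f -> (forall y, (0 <= f y)%R) ->
  \int[P]_x (N%:R^-1 * \sum_i f (X i x))%:E = \int[mu]_y (f y)%:E.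
Proof.
move=> N_gt0 mX lawX mf f_ge0.
have mfX i : measurable_fun setT (fun x => (f (X i x))%:E).
  exact/measurable_EFinP/(measurableT_comp mf (mX i)).
under eq_integral => x _ do rewrite EFinM -sumEFin.
rewrite ge0_integralZl//; last 2 first.
- by apply: emeasurable_sum => i; exact: mfX.
- by move=> x _; apply: sume_ge0 => i _; rewrite lee_fin.
rewrite ge0_integral_sum// => [|i x _]; last by rewrite lee_fin.
have mfE : measurable_fun setT (EFin \o f) by exact/measurable_EFinP.
under eq_bigr => i _ do rewrite (ge0_integral_law _ _ (mX i) (lawX i) mfE) //.
rewrite sumr_const card_ord.
have -> : forall c : \bar R, (c *+ N)%R = N%:R%:E * c by move=> c; rewrite mule_natl.
by rewrite muleA -EFinM mulVf ?mul1e// pnatr_eq0 -lt0n.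
Qed.

End integral_lemmas.

Lemma integral_psi_ge {R : realType} (mu : {measure set R -> \bar R})
    (N : nat) (r : R) : (1 < N)%N -> 0 < r ->
  ((\int[mu]_(x in (`[0%R, r]%classic : set R))
      (x `^ (N%:R / (N.-1)%:R) / r `^ (1 / (N.-1)%:R))%:E)
     + r%:E * mu (`]r, +oo[%classic : set R) <= \int[mu]_x (psi N r x)%:E)%E.
Proof.
move=> N_gt1 r_gt0.
have psiE_ge0 x : (0 <= (psi N r x)%:E)%E by rewrite lee_fin psi_ge0.
have mpsi : measurable_fun setT (EFin \o psi N r).
  by apply/measurable_EFinP; exact: measurable_psi.
rewrite (@eq_integral _ _ _ _ _ (EFin \o psi N r)); last first.
  by move=> x; rewrite inE/= in_itv/= => x_in; rewrite psi_powR.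
have -> : (r%:E * mu (`]r, +oo[%classic : set R) =
    \int[mu]_(x in (`]r, +oo[%classic : set R)) (psi N r x)%:E)%E.
  rewrite -integral_cst//; apply: eq_integral => x.
  by rewrite inE/= in_itv/= andbT => r_lt_x; rewrite psi_ge// ltW.
rewrite -ge0_integral_setU//; last 3 first.
- exact: measurable_funS mpsi.
- by move=> x _; exact: psiE_ge0.
- rewrite disj_set2E; apply/eqP/seteqP; split => // x [] /=.
  by rewrite !in_itv/= andbT => /andP[_ x_le_r] /(le_lt_trans x_le_r); rewrite ltxx.
apply: ge0_subset_integral => //; first exact: measurableU.
by move=> x _; exact: psiE_ge0.
Qed.

Theorem lemma1 (R : realType) (N : nat) (r : R)
  (mu : probability R R)
  (d : measure_display) (Omega : measurableType d) (P : probability Omega R)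
  (X : 'I_N -> Omega -> R) :
  (2 <= N)%N -> 0 < r < 1 ->
  mu `[0, 1]%classic = 1%E ->
  (forall i, measurable_fun setT (X i)) ->
  (forall i (A : set R), measurable A -> P (X i @^-1` A) = mu A) ->
  ((\int[mu]_(x in (`[0%R, r]%classic : set R)) (x `^ (N%:R / (N.-1)%:R) / r `^ (1 / (N.-1)%:R))%:E)
     + r%:E * mu (`]r, +oo[%classic : set R) <=
   \int[P]_w (spa_revenue (Gr N r) (fun i => X i w))%:E)%E.
Proof.
move=> N_gt1 /andP[r_gt0 _] _ mX lawX.
apply: le_trans (integral_psi_ge mu _ _ N_gt1 r_gt0) _.
have mpsi := measurable_psi N_gt1 r_gt0.
rewrite -(ge0_integral_mean_law _ _ _ _ _ (ltnW N_gt1) mX lawX mpsi psi_ge0).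
apply: ge0_le_integral_nonmeasurable => w.
  by rewrite lee_fin mulr_ge0 ?invr_ge0// sumr_ge0// => i _; exact: psi_ge0.
by rewrite lee_fin spa_revenue_Gr_ge.
Qed.
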